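(* There exists a decreasing sequence $(\kappa_n)_{n=1}^\infty\subset(0,1/2)$ with $\kappa_n\to0$ such that each $T_{\kappa_n}$ is Markov, and each $\kappa_n$ satisfies $(2+2\kappa_n)^n\kappa_n=1$. Writing $T=T_{\kappa_n}$, a Markov partition for $T$ is, for $n=1$, $\{(-1,-\tfrac12),(-\tfrac12,-\kappa_1),(-\kappa_1,0),(0,\kappa_1),(\kappa_1,\tfrac12),(\tfrac12,1)\}$, and for $n\geq2$ it consists of the intervals $(-1,T(-\kappa_n))$; $(T^i(-\kappa_n),T^{i+1}(-\kappa_n))$ for $1\le i\le n-2$; $(T^{n-1}(-\kappa_n),-\tfrac12)$, $(-\tfrac12,-\kappa_n)$, $(-\kappa_n,0)$, $(0,\kappa_n)$, $(\kappa_n,\tfrac12)$, $(\tfrac12,T^{n-1}(\kappa_n))$; $(T^{i+1}(\kappa_n),T^i(\kappa_n))$ for $1\le i\le n-2$; and $(T(\kappa_n),1)$.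
   Context: For $\kappa\in(0,1/2)$, the paired tent map $T_\kappa:[-1,1]\to[-1,1]$ is $T_\kappa(x)=2(1+\kappa)(x+1)-1$ for $x\in[-1,-1/2]$, $T_\kappa(x)=-2(1+\kappa)x-1$ for $x\in[-1/2,0)$, $T_\kappa(0)=0$, $T_\kappa(x)=-2(1+\kappa)x+1$ for $x\in(0,1/2]$, $T_\kappa(x)=2(1+\kappa)(x-1)+1$ for $x\in[1/2,1]$. A map $T$ of an interval $I$ is Markov if there is a finite collection $\{R_i\}_{i=1}^r$ of disjoint open intervals (a Markov partition) such that $I\setminus\bigcup_iR_i$ is exactly the set of endpoints of the $R_i$, and whenever $R_i\cap T(R_j)\neq\emptyset$, we have $R_i\subset T(R_j)$. *)

From Stdlib Require Import Reals Lra List.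
Import ListNotations.
Open Scope R_scope.

(** The paired tent map T_kappa, extended to all of R by the outer formulas
    (only its values on [-1,1] matter). Both formulas agree at -1/2 and 1/2. *)
Definition tentT (k x : R) : R :=
  if Rle_dec x (-1/2) then 2 * (1 + k) * (x + 1) - 1
  else if Rlt_dec x 0 then - 2 * (1 + k) * x - 1
  else if Req_EM_T x 0 then 0
  else if Rle_dec x (1/2) then - 2 * (1 + k) * x + 1
  else 2 * (1 + k) * (x - 1) + 1.

Definition iterT (k : R) (i : nat) (x : R) : R := Nat.iter i (tentT k) x.

Definition in_ival (J : R * R) (x : R) : Prop := fst J < x < snd J.

(** Markov partition of the interval [l,u] for T (as in the paper):
    a finite collection of disjoint (nonempty) open intervals, such that
    [l,u] minus their union is exactly the set of their endpoints, and
    whenever R_i meets T(R_j), R_i is contained in T(R_j). *)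
Definition is_Markov_partition (T : R -> R) (l u : R) (P : list (R * R)) : Prop :=
  (forall J, In J P -> fst J < snd J) /\
  (forall i j, (i < length P)%nat -> (j < length P)%nat -> i <> j ->
     forall x, ~ (in_ival (nth i P (0,0)) x /\ in_ival (nth j P (0,0)) x)) /\
  (forall x,
     (l <= x <= u /\ ~ (exists J, In J P /\ in_ival J x)) <->
     (exists J, In J P /\ (x = fst J \/ x = snd J))) /\
  (forall Ri Rj, In Ri P -> In Rj P ->
     (exists z, in_ival Rj z /\ in_ival Ri (T z)) ->
     (forall y, in_ival Ri y -> exists z, in_ival Rj z /\ T z = y)).

Definition is_Markov (T : R -> R) (l u : R) : Prop :=
  exists P : list (R * R), is_Markov_partition T l u P.

Definition paper_partition (n : nat) (k : R) : list (R * R) :=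
  if Nat.eqb n 1 then
    [(-1, -1/2); (-1/2, -k); (-k, 0); (0, k); (k, 1/2); (1/2, 1)]
  else
    [(-1, tentT k (-k))]
    ++ map (fun i => (iterT k i (-k), iterT k (i+1) (-k))) (seq 1 (n-2))
    ++ [(iterT k (n-1) (-k), -1/2); (-1/2, -k); (-k, 0); (0, k); (k, 1/2);
        (1/2, iterT k (n-1) k)]
    ++ map (fun i => (iterT k (i+1) k, iterT k i k)) (seq 1 (n-2))
    ++ [(tentT k k, 1)].

(* Write lambda = 2 + 2 kappa, so that kappa lambda^n = 1.  On [-1, 0] the orbit of
   -kappa is -kappa |-> -1 + kappa lambda |-> ... |-> -1 + kappa lambda^(n-1) |-> 0,
   the last step because kappa lambda^n = 1; moreover -1 is fixed and -1/2 |-> kappa.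
   So these points, -1/2 and their mirror images form a grid that T maps into
   itself, and T is affine with nonzero slope on every cell of the grid.  Such a
   map sends each cell onto an open interval between two grid points, i.e. onto a
   union of cells up to grid points, so the cells form a Markov partition.  As T is
   odd and the grid symmetric, only the cells in [-1, 0] need to be checked. *)

From Stdlib Require Import Reals List Lra Lia.
Import ListNotations.
Open Scope R_scope.

Lemma affine_preimage a b x1 x2 y : a <> 0 -> x1 < x2 ->
  (a * x1 + b < y < a * x2 + b \/ a * x2 + b < y < a * x1 + b) ->
  x1 < (y - b) / a < x2 /\ a * ((y - b) / a) + b = y.
Proof.
  intros Ha Hx Hy.
  set (t := (y - b) / a).
  assert (Ht : y = a * t + b) by (unfold t; field; exact Ha).
  split; [|lra].
  rewrite Ht in Hy.
  destruct (Rlt_or_le 0 a); [|assert (a < 0) by lra]; destruct Hy; split; nra.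
Qed.

Section Grid.

Variables (p : nat -> R) (M : nat).

Definition cell (j : nat) : R * R := (p j, p (S j)).

Definition on_grid (x : R) : Prop := exists r, (r <= M)%nat /\ p r = x.

Definition Markov_cell (T : R -> R) (j : nat) : Prop :=
  exists a b, a <> 0 /\
    (forall z, p j < z < p (S j) -> T z = a * z + b) /\
    on_grid (a * p j + b) /\ on_grid (a * p (S j) + b).

Lemma on_grid_opp x :
  (forall i, (i <= M)%nat -> p (M - i) = - p i) -> on_grid x -> on_grid (- x).
Proof.
  intros Hsym [r [Hr <-]]. exists (M - r)%nat. split; [lia | apply Hsym; exact Hr].
Qed.

Lemma Markov_cell_reflect T j :
  (forall x, T (- x) = - T x) -> (forall i, (i <= M)%nat -> p (M - i) = - p i) ->
  (j < M)%nat -> Markov_cell T j -> Markov_cell T (M - S j).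
Proof.
  intros Hodd Hsym Hj [a [b [Ha [HT [Hl Hr]]]]].
  assert (El : p (M - S j) = - p (S j)) by (apply Hsym; lia).
  assert (Er : p (S (M - S j)) = - p j)
    by (replace (S (M - S j)) with (M - j)%nat by lia; apply Hsym; lia).
  exists a, (- b). split; [exact Ha | split; [|split]].
  - intros z Hz. rewrite El, Er in Hz.
    assert (E := Hodd (- z)). rewrite Ropp_involutive in E.
    rewrite E, HT by lra. ring.
  - rewrite El. replace (a * - p (S j) + - b) with (- (a * p (S j) + b)) by ring.
    apply on_grid_opp; assumption.
  - rewrite Er. replace (a * - p j + - b) with (- (a * p j + b)) by ring.
    apply on_grid_opp; assumption.
Qed.

Hypothesis p_incr : forall j, (j < M)%nat -> p j < p (S j).

Lemma grid_lt i j : (i < j)%nat -> (j <= M)%nat -> p i < p j.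
Proof.
  induction 1 as [|j Hij IH]; intros HjM.
  - apply p_incr; lia.
  - apply Rlt_trans with (p j); [apply IH; lia | apply p_incr; lia].
Qed.

Lemma grid_le i j : (i <= j <= M)%nat -> p i <= p j.
Proof.
  intros H. destruct (Nat.eq_dec i j) as [->|]; [lra | left; apply grid_lt; lia].
Qed.

Lemma grid_lt_index i j : (i <= M)%nat -> p i < p j -> (i < j)%nat.
Proof.
  intros Hi Hp. destruct (Nat.lt_ge_cases i j) as [|Hji]; [assumption|].
  pose proof (grid_le j i ltac:(lia)). lra.
Qed.

Lemma grid_point_or_cell x : p 0%nat <= x <= p M ->
  (exists j, (j <= M)%nat /\ x = p j) \/ (exists j, (j < M)%nat /\ in_ival (cell j) x).
Proof.
  enough (H : forall N, (N <= M)%nat -> p 0%nat <= x <= p N ->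
    (exists j, (j <= N)%nat /\ x = p j) \/ (exists j, (j < N)%nat /\ in_ival (cell j) x)).
  { intros Hx. apply H; [lia | exact Hx]. }
  induction N as [|N IH]; intros HN Hx.
  - left. exists 0%nat. split; [lia | lra].
  - destruct (Rle_lt_dec x (p N)) as [Hle|Hlt].
    + destruct (IH ltac:(lia) ltac:(lra)) as [[j [Hj ->]]|[j [Hj Hin]]].
      * left. exists j. split; [lia | reflexivity].
      * right. exists j. split; [lia | exact Hin].
    + destruct (Req_dec x (p (S N))) as [->|Hne].
      * left. exists (S N). split; [lia | reflexivity].
      * right. exists N. split; [lia |]. unfold in_ival, cell; simpl; lra.
Qed.

Lemma cell_index_unique i j x : (i < M)%nat -> (j < M)%nat ->
  in_ival (cell i) x -> in_ival (cell j) x -> i = j.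
Proof.
  unfold in_ival, cell; simpl. intros Hi Hj Hxi Hxj.
  assert (i < S j)%nat by (apply grid_lt_index; [lia | lra]).
  assert (j < S i)%nat by (apply grid_lt_index; [lia | lra]).
  lia.
Qed.

Lemma grid_point_not_in_cell i j : (i <= M)%nat -> (j < M)%nat -> ~ in_ival (cell j) (p i).
Proof.
  unfold in_ival, cell; simpl. intros Hi Hj [H1 H2].
  assert (i < S j)%nat by (apply grid_lt_index; [exact Hi | exact H2]).
  assert (j < i)%nat by (apply grid_lt_index; [lia | exact H1]).
  lia.
Qed.

Lemma cell_between_grid r s m w y : (r <= M)%nat -> (s <= M)%nat -> (m < M)%nat ->
  p r < w < p s -> in_ival (cell m) w -> in_ival (cell m) y -> p r < y < p s.
Proof.
  unfold in_ival, cell; simpl. intros Hr Hs Hm Hw Hwm Hym.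
  assert (r < S m)%nat by (apply grid_lt_index; [exact Hr | lra]).
  assert (m < s)%nat by (apply grid_lt_index; [lia | lra]).
  pose proof (grid_le r m ltac:(lia)). pose proof (grid_le (S m) s ltac:(lia)).
  lra.
Qed.

Lemma Markov_cell_onto T j m : (j < M)%nat -> (m < M)%nat -> Markov_cell T j ->
  (exists z, in_ival (cell j) z /\ in_ival (cell m) (T z)) ->
  forall y, in_ival (cell m) y -> exists z, in_ival (cell j) z /\ T z = y.
Proof.
  intros Hj Hm [a [b [Ha [HT [[r [Hr Hpr]] [s [Hs Hps]]]]]]] [z [Hz HTz]] y Hy.
  pose proof (p_incr j Hj) as Hcell.
  rewrite (HT z Hz) in HTz. unfold in_ival, cell in Hz; simpl in Hz.
  assert (Hbetween : a * p j + b < y < a * p (S j) + b \/ a * p (S j) + b < y < a * p j + b).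
  { rewrite <- Hpr, <- Hps. destruct (Rlt_or_le 0 a).
    - left. apply (cell_between_grid r s m (a * z + b)); auto. rewrite Hpr, Hps. split; nra.
    - right. apply (cell_between_grid s r m (a * z + b)); auto.
      assert (a < 0) by lra. rewrite Hpr, Hps. split; nra. }
  destruct (affine_preimage a b (p j) (p (S j)) y Ha Hcell Hbetween) as [Hx Hval].
  exists ((y - b) / a). split; [exact Hx |]. rewrite HT by exact Hx. exact Hval.
Qed.

Variable L : list nat.
Hypothesis L_nodup : NoDup L.
Hypothesis L_enum : forall j, In j L <-> (j < M)%nat.

Lemma in_cells J : In J (map cell L) <-> exists j, (j < M)%nat /\ J = cell j.
Proof.
  rewrite in_map_iff. split.
  - intros [j [<- Hj]]. exists j. split; [apply L_enum; exact Hj | reflexivity].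
  - intros [j [Hj ->]]. exists j. split; [reflexivity | apply L_enum; exact Hj].
Qed.

Theorem grid_Markov_partition T : (1 <= M)%nat ->
  (forall j, (j < M)%nat -> Markov_cell T j) ->
  is_Markov_partition T (p 0%nat) (p M) (map cell L).
Proof.
  intros HM HT. split; [|split; [|split]].
  - intros J [j [Hj ->]]%in_cells. exact (p_incr j Hj).
  - intros i j Hi Hj Hij x [Hxi Hxj]. rewrite length_map in Hi, Hj.
    rewrite nth_indep with (d' := cell 0), map_nth in Hxi, Hxj by (rewrite length_map; lia).
    apply Hij, (proj1 (NoDup_nth L 0%nat) L_nodup); [exact Hi | exact Hj |].
    apply (cell_index_unique _ _ x); [apply L_enum, nth_In; assumption.. | exact Hxi | exact Hxj].
  - intros x. split.
    + intros [Hx Hnot]. destruct (grid_point_or_cell x Hx) as [[j [Hj ->]]|[j [Hj Hxj]]].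
      * destruct (Nat.eq_dec j M) as [->|Hne].
        -- exists (cell (M - 1)). split; [apply in_cells; exists (M - 1)%nat; split; [lia | reflexivity] |].
           right. simpl. f_equal. lia.
        -- exists (cell j). split; [apply in_cells; exists j; split; [lia | reflexivity] |].
           left. reflexivity.
      * exfalso. apply Hnot. exists (cell j). split; [apply in_cells; exists j; auto | exact Hxj].
    + intros [J [[j [Hj ->]]%in_cells Hx]].
      assert (exists i, (i <= M)%nat /\ x = p i) as [i [Hi ->]]
        by (destruct Hx as [->| ->]; [exists j | exists (S j)]; split; (lia || reflexivity)).
      split; [split; apply grid_le; lia |].
      intros [J [[m [Hm ->]]%in_cells Hin]]. exact (grid_point_not_in_cell i m Hi Hm Hin).
  - intros Ri Rj [m [Hm ->]]%in_cells [j [Hj ->]]%in_cells.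
    apply Markov_cell_onto; auto.
Qed.

End Grid.

Lemma tentT_left_outer k x : x <= -1/2 -> tentT k x = (2+2*k) * x + (2+2*k - 1).
Proof. intros Hx. unfold tentT. destruct (Rle_dec x (-1/2)); [ring | lra]. Qed.

Lemma tentT_left_inner k x : -1/2 <= x < 0 -> tentT k x = - (2+2*k) * x - 1.
Proof.
  intros Hx. unfold tentT. destruct (Rle_dec x (-1/2)).
  - replace x with (-1/2) by lra. field.
  - destruct (Rlt_dec x 0); [ring | lra].
Qed.

Lemma tentT_right_inner k x : 0 < x <= 1/2 -> tentT k x = - (2+2*k) * x + 1.
Proof.
  intros Hx. unfold tentT.
  destruct (Rle_dec x (-1/2)); [lra |]. destruct (Rlt_dec x 0); [lra |].
  destruct (Req_EM_T x 0); [lra |]. destruct (Rle_dec x (1/2)); [ring | lra].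
Qed.

Lemma tentT_right_outer k x : 1/2 <= x -> tentT k x = (2+2*k) * x + (1 - (2+2*k)).
Proof.
  intros Hx. destruct (Req_dec x (1/2)) as [->|Hne].
  - rewrite tentT_right_inner by lra. field.
  - unfold tentT. destruct (Rle_dec x (-1/2)); [lra |]. destruct (Rlt_dec x 0); [lra |].
    destruct (Req_EM_T x 0); [lra |]. destruct (Rle_dec x (1/2)); [lra | ring].
Qed.

Lemma tentT_0 k : tentT k 0 = 0.
Proof.
  unfold tentT. destruct (Rle_dec 0 (-1/2)); [lra |]. destruct (Rlt_dec 0 0); [lra |].
  destruct (Req_EM_T 0 0); [reflexivity | lra].
Qed.

Lemma tentT_opp k x : tentT k (- x) = - tentT k x.
Proof.
  destruct (Rtotal_order x 0) as [Hx|[->|Hx]].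
  - destruct (Rle_dec x (-1/2)).
    + rewrite (tentT_left_outer k x), (tentT_right_outer k (- x)) by lra. ring.
    + rewrite (tentT_left_inner k x), (tentT_right_inner k (- x)) by lra. ring.
  - rewrite Ropp_0, tentT_0. ring.
  - destruct (Rle_dec x (1/2)).
    + rewrite (tentT_left_inner k (- x)), (tentT_right_inner k x) by lra. ring.
    + rewrite (tentT_left_outer k (- x)), (tentT_right_outer k x) by lra. ring.
Qed.

Lemma iterT_S k i x : iterT k (S i) x = tentT k (iterT k i x).
Proof. reflexivity. Qed.

Lemma iterT_opp k i x : iterT k i (- x) = - iterT k i x.
Proof.
  induction i as [|i IH]; [reflexivity |].
  rewrite !iterT_S, IH. apply tentT_opp.
Qed.

(* Indices [1 <= j < n] carry the orbit points [-1 + k (2+2k)^j = T^j(-k)].  The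
   full grid has indices [0 .. 2n+4] and mirrors [left_grid] beyond index [n+2]. *)
Definition left_grid (n : nat) (k : R) (j : nat) : R :=
  if (j =? 0)%nat then -1
  else if (j <? n)%nat then -1 + k * (2+2*k)^j
  else if (j =? n)%nat then -1/2
  else if (j =? S n)%nat then -k
  else 0.

Definition tent_grid (n : nat) (k : R) (j : nat) : R :=
  if (j <=? n + 2)%nat then left_grid n k j else - left_grid n k (2*n + 4 - j).

(* The cells in the order of [paper_partition], whose right half runs right to left. *)
Definition paper_cell_order (n : nat) : list nat :=
  if (n =? 1)%nat then seq 0 6
  else [0%nat] ++ seq 1 (n - 2) ++ [n - 1; n; n + 1; n + 2; n + 3; n + 4]%nat
       ++ map (fun i => 2*n + 3 - i)%nat (seq 1 (n - 2)) ++ [(2*n + 3)%nat].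

Lemma paper_cell_order_enum n j : (1 <= n)%nat ->
  In j (paper_cell_order n) <-> (j < 2*n + 4)%nat.
Proof.
  intros Hn. unfold paper_cell_order. destruct (Nat.eqb_spec n 1) as [->|Hn1].
  { rewrite in_seq. lia. }
  rewrite !in_app_iff, in_map_iff, !in_seq. simpl. split.
  - intros [H|[H|[H|[[i [<- Hi%in_seq]]|H]]]]; repeat (destruct H as [H|H]); lia.
  - intros Hj.
    assert (j = 0 \/ 1 <= j <= n - 2 \/ n - 1 <= j <= n + 4 \/ n + 5 <= j <= 2*n + 2
            \/ j = 2*n + 3)%nat as [H|[H|[H|[H|H]]]] by lia.
    + left; lia.
    + right; left; lia.
    + do 2 right; left; lia.
    + do 3 right; left. exists (2*n + 3 - j)%nat. rewrite in_seq. lia.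
    + do 4 right; left; lia.
Qed.

Lemma paper_cell_order_nodup n : (1 <= n)%nat -> NoDup (paper_cell_order n).
Proof.
  intros Hn. apply (NoDup_incl_NoDup (l := seq 0 (2*n + 4))).
  - apply seq_NoDup.
  - rewrite length_seq. unfold paper_cell_order. destruct (Nat.eqb_spec n 1) as [->|Hn1].
    + simpl. lia.
    + rewrite !length_app, length_map, !length_seq. simpl. lia.
  - intros j Hj%in_seq. apply paper_cell_order_enum; lia.
Qed.

Ltac decide_nat_tests :=
  repeat match goal with
  | |- context [(?a =? ?b)%nat] => destruct (Nat.eqb_spec a b); try lia
  | |- context [(?a <? ?b)%nat] => destruct (Nat.ltb_spec a b); try lia
  | |- context [(?a <=? ?b)%nat] => destruct (Nat.leb_spec a b); try lia
  end.

Section KappaGrid.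

Variables (n : nat) (k : R).
Hypothesis n_pos : (1 <= n)%nat.
Hypothesis k_range : 0 < k < 1/2.
Hypothesis k_eq : (2+2*k)^n * k = 1.

Let p := tent_grid n k.
Let M := (2*n + 4)%nat.

Lemma tent_grid_neg_one j : j = 0%nat -> p j = -1.
Proof. intros; unfold p, tent_grid, left_grid; decide_nat_tests; reflexivity. Qed.

Lemma tent_grid_orbit j : (1 <= j < n)%nat -> p j = -1 + k * (2+2*k)^j.
Proof. intros; unfold p, tent_grid, left_grid; decide_nat_tests; reflexivity. Qed.

Lemma tent_grid_neg_half j : j = n -> p j = -1/2.
Proof. intros; unfold p, tent_grid, left_grid; decide_nat_tests; reflexivity. Qed.

Lemma tent_grid_neg_kappa j : j = S n -> p j = -k.
Proof. intros; unfold p, tent_grid, left_grid; decide_nat_tests; reflexivity. Qed.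

Lemma tent_grid_zero j : j = (n + 2)%nat -> p j = 0.
Proof. intros; unfold p, tent_grid, left_grid; decide_nat_tests; reflexivity. Qed.

Lemma tent_grid_mirror i j : (j <= M)%nat -> i = (M - j)%nat -> p i = - p j.
Proof.
  intros; subst; unfold p, M, tent_grid, left_grid; decide_nat_tests;
    repeat f_equal; lia || ring.
Qed.

Lemma tent_grid_kappa j : j = (n + 3)%nat -> p j = k.
Proof.
  intros ->. rewrite (tent_grid_mirror _ (S n)), (tent_grid_neg_kappa (S n)) by (unfold M; lia).
  ring.
Qed.

Lemma tent_grid_half j : j = (n + 4)%nat -> p j = 1/2.
Proof.
  intros ->. rewrite (tent_grid_mirror _ n), (tent_grid_neg_half n) by (unfold M; lia).
  field.
Qed.

Lemma tent_grid_one j : j = M -> p j = 1.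
Proof.
  intros ->. rewrite (tent_grid_mirror _ 0), (tent_grid_neg_one 0) by (unfold M; lia).
  ring.
Qed.

Lemma orbit_small i : (i < n)%nat -> 0 < k * (2+2*k)^i < 1/2.
Proof.
  intros Hi.
  assert (Hpow : (2+2*k)^i <= (2+2*k)^(n-1)) by (apply Rle_pow; [lra | lia]).
  assert (Hlast : (2+2*k) * ((2+2*k)^(n-1) * k) = 1).
  { rewrite <- k_eq. replace n with (S (n-1)) at 2 by lia. simpl. ring. }
  assert (0 < (2+2*k)^i) by (apply pow_lt; lra).
  split; nra.
Qed.

Lemma tent_grid_left_incr j : (j < n + 2)%nat -> p j < p (S j).
Proof.
  intros Hj.
  destruct (Nat.eq_dec j 0) as [->|Hj0].
  { rewrite (tent_grid_neg_one 0) by reflexivity.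
    destruct (Nat.eq_dec n 1) as [Hn1|Hn1].
    - rewrite (tent_grid_neg_half 1) by lia. lra.
    - rewrite (tent_grid_orbit 1) by lia. pose proof (orbit_small 1 ltac:(lia)). lra. }
  destruct (Nat.lt_ge_cases (S j) n) as [Hlt|Hge].
  { rewrite (tent_grid_orbit j), (tent_grid_orbit (S j)) by lia.
    pose proof (orbit_small j ltac:(lia)). simpl. nra. }
  destruct (Nat.eq_dec (S j) n) as [Heq|Hne].
  { rewrite (tent_grid_orbit j), (tent_grid_neg_half (S j)) by lia.
    pose proof (orbit_small j ltac:(lia)). lra. }
  destruct (Nat.eq_dec j n) as [->|Hjn].
  - rewrite (tent_grid_neg_half n), (tent_grid_neg_kappa (S n)) by reflexivity. lra.
  - rewrite (tent_grid_neg_kappa j), (tent_grid_zero (S j)) by lia. lra.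
Qed.

Lemma tent_grid_incr j : (j < M)%nat -> p j < p (S j).
Proof.
  intros Hj. destruct (Nat.lt_ge_cases j (n + 2)) as [Hl|Hr].
  - exact (tent_grid_left_incr j Hl).
  - rewrite (tent_grid_mirror j (M - j)), (tent_grid_mirror (S j) (M - S j)) by (unfold M; lia).
    replace (M - j)%nat with (S (M - S j)) by (unfold M; lia).
    pose proof (tent_grid_left_incr (M - S j) ltac:(unfold M; lia)). lra.
Qed.

Lemma tent_grid_symmetric i : (i <= M)%nat -> p (M - i) = - p i.
Proof. intros Hi. apply tent_grid_mirror; [exact Hi | reflexivity]. Qed.

Lemma outer_branch_image i : (i <= n)%nat ->
  on_grid p M ((2+2*k) * p i + (2+2*k - 1)).
Proof.
  intros Hi. destruct (Nat.eq_dec i 0) as [->|Hi0].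
  { exists 0%nat. split; [lia |]. rewrite (tent_grid_neg_one 0) by reflexivity. ring. }
  destruct (Nat.lt_ge_cases (S i) n) as [Hlt|Hge].
  { exists (S i). split; [unfold M; lia |].
    rewrite (tent_grid_orbit i), (tent_grid_orbit (S i)) by lia. simpl. ring. }
  destruct (Nat.eq_dec (S i) n) as [Heq|Hne].
  - exists (n + 2)%nat. split; [unfold M; lia |].
    rewrite (tent_grid_orbit i), (tent_grid_zero (n + 2)) by lia.
    rewrite <- Heq in k_eq. simpl in k_eq. lra.
  - exists (n + 3)%nat. split; [unfold M; lia |].
    rewrite (tent_grid_kappa (n + 3)), (tent_grid_neg_half i) by lia. field.
Qed.

Lemma inner_branch_image i : (n <= i <= n + 2)%nat ->
  on_grid p M (- (2+2*k) * p i + - 1).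
Proof.
  intros Hi. destruct (Nat.eq_dec i n) as [->|Hin].
  { exists (n + 3)%nat. split; [unfold M; lia |].
    rewrite (tent_grid_kappa (n + 3)), (tent_grid_neg_half n) by lia. field. }
  destruct (Nat.eq_dec i (n + 2)) as [->|Hi2].
  { exists 0%nat. split; [lia |].
    rewrite (tent_grid_neg_one 0), (tent_grid_zero (n + 2)) by reflexivity. ring. }
  rewrite (tent_grid_neg_kappa i) by lia.
  destruct (Nat.eq_dec n 1) as [Hn1|Hn1].
  - exists (n + 2)%nat. split; [unfold M; lia |]. rewrite (tent_grid_zero (n + 2)) by reflexivity.
    subst n. simpl in k_eq. lra.
  - exists 1%nat. split; [unfold M; lia |]. rewrite (tent_grid_orbit 1) by lia. simpl. ring.
Qed.

Lemma tent_Markov_cell_left j : (j < n + 2)%nat -> Markov_cell p M (tentT k) j.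
Proof.
  intros Hj. pose proof (grid_le p M tent_grid_incr) as Hle.
  destruct (Nat.lt_ge_cases j n) as [Hjn|Hjn].
  - exists (2+2*k), (2+2*k - 1). split; [lra | split; [| split]].
    + intros z Hz. apply tentT_left_outer.
      pose proof (Hle (S j) n ltac:(unfold M; lia)) as Hhalf.
      rewrite (tent_grid_neg_half n) in Hhalf by reflexivity. lra.
    + apply outer_branch_image. lia.
    + apply outer_branch_image. lia.
  - exists (- (2+2*k)), (- 1). split; [lra | split; [| split]].
    + intros z Hz. rewrite tentT_left_inner; [ring |].
      pose proof (Hle n j ltac:(unfold M; lia)) as Hhalf.
      pose proof (Hle (S j) (n + 2)%nat ltac:(unfold M; lia)) as Hzero.
      rewrite (tent_grid_neg_half n) in Hhalf by reflexivity.
      rewrite (tent_grid_zero (n + 2)) in Hzero by reflexivity. lra.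
    + apply inner_branch_image. lia.
    + apply inner_branch_image. lia.
Qed.

Lemma tent_Markov_cell j : (j < M)%nat -> Markov_cell p M (tentT k) j.
Proof.
  intros Hj. destruct (Nat.lt_ge_cases j (n + 2)) as [Hl|Hr].
  - exact (tent_Markov_cell_left j Hl).
  - replace j with (M - S (M - S j))%nat by (unfold M; lia).
    apply Markov_cell_reflect.
    + apply tentT_opp.
    + exact tent_grid_symmetric.
    + unfold M; lia.
    + apply tent_Markov_cell_left. unfold M; lia.
Qed.

Lemma iterT_neg_kappa i : (1 <= i < n)%nat -> iterT k i (- k) = p i.
Proof.
  induction i as [|i IH]; intros Hi; [lia |].
  rewrite iterT_S, (tent_grid_orbit (S i)) by lia.
  destruct (Nat.eq_dec i 0) as [->|Hi0].
  - simpl. rewrite tentT_left_inner by lra. ring.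
  - rewrite IH, (tent_grid_orbit i) by lia.
    pose proof (orbit_small i ltac:(lia)).
    rewrite tentT_left_outer by lra. simpl. ring.
Qed.

Lemma iterT_kappa i : (1 <= i < n)%nat -> iterT k i k = p (M - i).
Proof.
  intros Hi. rewrite (tent_grid_mirror (M - i) i), <- iterT_neg_kappa by (unfold M; lia).
  rewrite iterT_opp. ring.
Qed.

Lemma paper_partition_cells :
  paper_partition n k = map (cell p) (paper_cell_order n).
Proof.
  unfold paper_partition, paper_cell_order. destruct (Nat.eqb_spec n 1) as [Hn1|Hn1].
  { unfold p, cell, tent_grid, left_grid. rewrite Hn1. simpl.
    decide_nat_tests; repeat f_equal; field. }
  rewrite !map_app, map_map.
  change (tentT k (- k)) with (iterT k 1 (- k)). change (tentT k k) with (iterT k 1 k).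
  rewrite (iterT_neg_kappa 1), (iterT_neg_kappa (n - 1)), (iterT_kappa 1), (iterT_kappa (n - 1))
    by lia.
  apply f_equal2.
  { reflexivity. }
  apply f_equal2.
  { apply map_ext_in. intros i Hi%in_seq.
    rewrite iterT_neg_kappa, iterT_neg_kappa by lia. unfold cell. do 2 f_equal. lia. }
  apply f_equal2.
  { unfold cell. cbn [map].
    rewrite (tent_grid_neg_half n), (tent_grid_neg_half (S (n - 1))), (tent_grid_neg_kappa (n + 1)),
      (tent_grid_neg_kappa (S n)), (tent_grid_zero (n + 2)), (tent_grid_zero (S (n + 1))),
      (tent_grid_kappa (n + 3)), (tent_grid_kappa (S (n + 2))), (tent_grid_half (n + 4)),
      (tent_grid_half (S (n + 3))) by lia.
    replace (M - (n - 1))%nat with (S (n + 4)) by (unfold M; lia). reflexivity. }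
  apply f_equal2.
  - apply map_ext_in. intros i Hi%in_seq.
    rewrite iterT_kappa, iterT_kappa by lia. unfold cell, M. f_equal; f_equal; lia.
  - unfold cell. cbn [map]. rewrite (tent_grid_one (S (2*n + 3))) by (unfold M; lia).
    replace (M - 1)%nat with (2*n + 3)%nat by (unfold M; lia). reflexivity.
Qed.

Theorem paper_partition_Markov :
  is_Markov_partition (tentT k) (-1) 1 (paper_partition n k).
Proof.
  rewrite paper_partition_cells, <- (tent_grid_neg_one 0), <- (tent_grid_one M) by reflexivity.
  apply grid_Markov_partition.
  - exact tent_grid_incr.
  - apply paper_cell_order_nodup. exact n_pos.
  - intros j. apply paper_cell_order_enum. exact n_pos.
  - unfold M. lia.
  - exact tent_Markov_cell.
Qed.

End KappaGrid.

Definition kappa_defect (m : nat) (x : R) : R := (2+2*x)^(S m) * x - 1.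

Lemma kappa_defect_continuous m : continuity (kappa_defect m).
Proof. unfold kappa_defect. reg. Qed.

Lemma kappa_defect_0 m : kappa_defect m 0 < 0.
Proof. unfold kappa_defect. rewrite Rmult_0_r. lra. Qed.

Lemma kappa_defect_half m : 0 < kappa_defect m (1/2).
Proof.
  unfold kappa_defect. replace (2 + 2 * (1/2)) with 3 by field.
  assert (1 <= 3^m) by (apply pow_R1_Rle; lra). simpl. lra.
Qed.

(* Using [pred n] makes [kappa 0] a junk value (equal to [kappa 1]). *)
Definition kappa (n : nat) : R :=
  proj1_sig (IVT (kappa_defect (pred n)) 0 (1/2) (kappa_defect_continuous _)
    ltac:(lra) (kappa_defect_0 _) (kappa_defect_half _)).

Lemma kappa_spec n : (1 <= n)%nat -> 0 < kappa n < 1/2 /\ (2 + 2 * kappa n)^n * kappa n = 1.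
Proof.
  intros Hn. unfold kappa.
  destruct (IVT _ _ _ _ _ _ _) as [x [Hx Hroot]]; simpl.
  pose proof (kappa_defect_0 (pred n)). pose proof (kappa_defect_half (pred n)).
  assert (x <> 0) by (intros ->; lra). assert (x <> 1/2) by (intros ->; lra).
  unfold kappa_defect in Hroot. replace (S (pred n)) with n in Hroot by lia.
  split; lra.
Qed.

Lemma kappa_decreasing n : (1 <= n)%nat -> kappa (S n) < kappa n.
Proof.
  intros Hn. destruct (kappa_spec n Hn) as [[Hx0 Hx1] Hx].
  destruct (kappa_spec (S n) ltac:(lia)) as [[Hy0 Hy1] Hy].
  destruct (Rlt_or_le (kappa (S n)) (kappa n)) as [|Hle]; [assumption | exfalso].
  assert ((2 + 2 * kappa n)^n <= (2 + 2 * kappa (S n))^n) by (apply pow_incr; lra).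
  assert (0 < (2 + 2 * kappa n)^n) by (apply pow_lt; lra).
  simpl in Hy. nra.
Qed.

Lemma kappa_le_pow n : (1 <= n)%nat -> kappa n <= (1/2)^n.
Proof.
  intros Hn. destruct (kappa_spec n Hn) as [[H0 H1] Heq].
  assert (2^n <= (2 + 2 * kappa n)^n) by (apply pow_incr; lra).
  assert (Hhalf : (1/2)^n * 2^n = 1)
    by (rewrite <- Rpow_mult_distr; replace (1/2 * 2) with 1 by field; apply pow1).
  assert (0 < (1/2)^n) by (apply pow_lt; lra).
  assert (2^n * kappa n <= 1) by nra.
  replace (kappa n) with ((1/2)^n * (2^n * kappa n)) by (rewrite <- Rmult_assoc, Hhalf; ring).
  nra.
Qed.

Lemma kappa_cv : Un_cv kappa 0.
Proof.
  intros eps Heps.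
  destruct (pow_lt_1_zero (1/2) ltac:(rewrite Rabs_pos_eq; lra) eps Heps) as [N HN].
  exists (Nat.max N 1). intros n Hn. unfold R_dist. rewrite Rminus_0_r.
  destruct (kappa_spec n ltac:(lia)) as [[H0 _] _].
  pose proof (kappa_le_pow n ltac:(lia)). pose proof (HN n ltac:(lia)).
  rewrite Rabs_pos_eq in * by (try apply pow_le; lra).
  lra.
Qed.

Theorem lemma4 :
  exists kappa : nat -> R,
    (forall n : nat, (1 <= n)%nat -> 0 < kappa n < 1/2) /\
    (forall n : nat, (1 <= n)%nat -> kappa (S n) < kappa n) /\
    Un_cv kappa 0 /\
    (forall n : nat, (1 <= n)%nat ->
       is_Markov (tentT (kappa n)) (-1) 1 /\
       (2 + 2 * kappa n) ^ n * kappa n = 1 /\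
       is_Markov_partition (tentT (kappa n)) (-1) 1 (paper_partition n (kappa n))).
Proof.
  exists kappa. split; [| split; [| split]].
  - intros n Hn. apply kappa_spec, Hn.
  - exact kappa_decreasing.
  - exact kappa_cv.
  - intros n Hn. destruct (kappa_spec n Hn) as [Hk Heq].
    pose proof (paper_partition_Markov n (kappa n) Hn Hk Heq) as HP.
    split; [exists (paper_partition n (kappa n)); exact HP | split; [exact Heq | exact HP]].
Qed.
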